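(* Let $F$, $H$, $X$, $\Omega$, $Q$ and the sequences generated by the IneIREG method be as described in the context. Suppose $\eta_k\equiv\eta>0$ for all $k\ge0$; $\alpha_0\in[0,1]$ and $(\alpha_k)_{k\ge0}$ is nonincreasing; $\lambda_k\in[\underline\lambda,\overline\lambda]$ for all $k\ge0$ with $0<\underline\lambda\le\overline\lambda\le1/(L_F+\eta L_H)$; and $\hat s:=\sum_{k=0}^\infty\delta_k<+\infty$. For $k\ge1$ let $\Lambda_k=\sum_{j=0}^{k-1}\lambda_j$ and $\overline y_k=\Lambda_k^{-1}\sum_{j=0}^{k-1}\lambda_jy_j$. Then: (a) for all $k\ge1$, $-B_H\,\mathrm{dist}(\overline y_k,Q)\le\mathrm{Gap}(\overline y_k,H,Q)\le \frac1k\Big(\frac{D_X^2+\hat s}{2\underline\lambda\eta}\Big)$; (b) for all $k\ge1$, $0\le\mathrm{Gap}(\overline y_k,F,X)\le\frac1k\Big(\frac{D_X^2+\hat s}{2\underline\lambda}\Big)+\eta\Big(\frac{\overline\lambda C_HD_X}{\underline\lambda}\Big)$; (c) if $Q$ is $\sigma$-weakly sharp of order $\mathcal M\ge1$, then for all $k\ge1$, $\mathrm{Gap}(\overline y_k,H,Q)\ge-\frac{B_H}{\sigma^{1/\mathcal M}}\Big(\frac1k\Big(\frac{D_X^2+\hat s}{2\underline\lambda}\Big)+\eta\Big(\frac{\overline\lambda C_HD_X}{\underline\lambda}\Big)\Big)^{1/\mathcal M}$.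
   Context: Work in $\mathbb{R}^n$ with Euclidean inner product $\langle\cdot,\cdot\rangle$ and norm $\|\cdot\|$. The maps $F\colon \mathrm{Dom}\,F\to\mathbb{R}^n$ and $H\colon\mathrm{Dom}\,H\to\mathbb{R}^n$ are monotone and Lipschitz continuous with constants $L_F>0$ and $L_H>0$. $X$ is a nonempty compact convex set and $\Omega$ a nonempty closed convex set with $X\subset\Omega\subset\mathrm{Dom}\,F\cap\mathrm{Dom}\,H$; $P_X,P_\Omega$ denote orthogonal projections. $Q:=\{x\in X:\langle F(x),y-x\rangle\ge0\ \forall y\in X\}$ is assumed nonempty. $D_X:=\sup_{x,y\in X}\|x-y\|$, $C_H:=\sup_{x\in X}\|H(x)\|$, $B_H:=\sup_{x\in Q}\|H(x)\|$, $\mathrm{dist}(y,Q)$ is the Euclidean distance to $Q$. $\mathrm{Gap}(z,H,Q):=\sup_{x\in Q}\langle H(x),z-x\rangle$, $\mathrm{Gap}(z,F,X):=\sup_{x\in X}\langle F(x),z-x\rangle$. $Q$ is $\sigma$-weakly sharp of order $\mathcal M\ge1$ ($\sigma>0$) if $\langle F(x),y-x\rangle\ge\sigma\,\mathrm{dist}(y,Q)^{\mathcal M}$ for all $x\in Q$, $y\in X$. IneIREG method: start with $x_0=x_{-1}\in X$; for $k=0,1,\dots$, with parameters $\alpha_k\ge0$, $\lambda_k>0$, $\eta_k>0$, set $w_k=x_k+\alpha_k(x_k-x_{k-1})$, $w'_k=P_\Omega(w_k)$, $y_k=P_X\big(w_k-\lambda_k(F(w'_k)+\eta_kH(w'_k))\big)$,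 $x_{k+1}=P_X\big(w_k-\lambda_k(F(y_k)+\eta_kH(y_k))\big)$. Also $\delta_k:=\alpha_k(1+\alpha_k)\|x_k-x_{k-1}\|^2$ for $k\ge0$. *)

From HB Require Import structures.
From mathcomp Require Import all_boot all_order all_algebra.
From mathcomp Require Import all_classical all_reals all_analysis.
Set Implicit Arguments. Unset Strict Implicit. Unset Printing Implicit Defensive.
Import Order.TTheory GRing.Theory Num.Theory.
Import numFieldNormedType.Exports.
Local Open Scope classical_set_scope.
Local Open Scope ring_scope.

Section Euclid.
Variables (R : realType) (n : nat).
Notation V := 'rV[R]_n.

Definition dot (u v : V) : R := \sum_(i < n) u 0 i * v 0 i.
Definition enorm (u : V) : R := Num.sqrt (dot u u).

Definition convex_subset (C : set V) : Prop :=
  forall x y, C x -> C y -> forall t : R, 0 <= t <= 1 -> C (t *: x + (1 - t) *: y).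

Definition is_projection (C : set V) (P : V -> V) : Prop :=
  forall z, C (P z) /\ forall y, C y -> enorm (z - P z) <= enorm (z - y).

Definition monotone_map_on (D : set V) (F : V -> V) : Prop :=
  forall x y, D x -> D y -> 0 <= dot (F x - F y) (x - y).

Definition lipschitz_map_on (D : set V) (F : V -> V) (L : R) : Prop :=
  forall x y, D x -> D y -> enorm (F x - F y) <= L * enorm (x - y).

Definition VIsol (F : V -> V) (X : set V) : set V :=
  [set x | X x /\ forall y, X y -> 0 <= dot (F x) (y - x)].

Definition set_diam (X : set V) : R := sup [set enorm (x - y) | x in X & y in X].
Definition sup_norm (H : V -> V) (S : set V) : R := sup [set enorm (H x) | x in S].
Definition set_dist (y : V) (Q : set V) : R := inf [set enorm (y - x) | x in Q].
Definition Gap (z : V) (H : V -> V) (Q : set V) : R :=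
  sup [set dot (H x) (z - x) | x in Q].

Definition weakly_sharp (F : V -> V) (X Q : set V) (sigma M : R) : Prop :=
  forall x y, Q x -> X y -> sigma * (set_dist y Q) `^ M <= dot (F x) (y - x).
End Euclid.

(* Each IneIREG iteration is an extragradient step for G := F + eta H taken from the
   inertial point w_k.  The variational inequalities of the two projections onto X and
   the nonexpansiveness of the projection onto Omega give, for every z in X,
     |x_{k+1} - z|^2 <= |w_k - z|^2 - 2 lambda_k <G y_k, y_k - z>,
   and |w_k - z|^2 = (1 + alpha_k) |x_k - z|^2 - alpha_k |x_{k-1} - z|^2 + delta_k, so
   that |x_k - z|^2 - alpha_k |x_{k-1} - z|^2 telescopes when alpha_k is nonincreasing
   in [0, 1].  Hence sum_k 2 lambda_k <G y_k, y_k - z> <= D_X^2 + s_hat.  By monotonicity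
   <G y_k, y_k - z> dominates <F z, y_k - z> - eta C_H D_X for z in X, and
   eta <H q, y_k - q> for q in Q; averaging with the weights lambda_k gives the upper
   bounds of (a) and (b).  The lower bound of (a) is Cauchy-Schwarz, and in (c) weak
   sharpness turns the bound of (b) at a point of Q into a bound on dist(ybar_k, Q). *)

From HB Require Import structures.
From mathcomp Require Import all_boot all_order all_algebra.
From mathcomp Require Import all_classical all_reals all_analysis.
From mathcomp Require Import ring lra.
Set Implicit Arguments. Unset Strict Implicit. Unset Printing Implicit Defensive.
Import Order.TTheory GRing.Theory Num.Theory.
Import numFieldNormedType.Exports.
Local Open Scope classical_set_scope.
Local Open Scope ring_scope.

Section InnerProduct.
Variables (R : realType) (n : nat).
Implicit Types (u v w : 'rV[R]_n) (a : R).

Lemma dotC u v : dot u v = dot v u.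
Proof. by apply: eq_bigr => i _; rewrite mulrC. Qed.

Lemma dotDl u v w : dot (u + v) w = dot u w + dot v w.
Proof. by rewrite /dot -big_split; apply: eq_bigr => i _; rewrite mxE mulrDl. Qed.

Lemma dotDr u v w : dot w (u + v) = dot w u + dot w v.
Proof. by rewrite dotC dotDl !(dotC w). Qed.

Lemma dotZl a u w : dot (a *: u) w = a * dot u w.
Proof. by rewrite /dot mulr_sumr; apply: eq_bigr => i _; rewrite mxE mulrA. Qed.

Lemma dotZr a u w : dot w (a *: u) = a * dot w u.
Proof. by rewrite dotC dotZl dotC. Qed.

Lemma dotNl u w : dot (- u) w = - dot u w.
Proof. by rewrite -scaleN1r dotZl mulN1r. Qed.

Lemma dotNr u w : dot w (- u) = - dot w u.
Proof. by rewrite dotC dotNl dotC. Qed.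

Lemma dot0l w : dot 0 w = 0.
Proof. by rewrite -(scale0r 0) dotZl mul0r. Qed.

Lemma dot0r w : dot w 0 = 0.
Proof. by rewrite dotC dot0l. Qed.

Definition dotE := (dotDl, dotDr, dotNl, dotNr, dotZl, dotZr).

Lemma dot_sumr w K (f : nat -> 'rV[R]_n) :
  dot w (\sum_(j < K) f j) = \sum_(j < K) dot w (f j).
Proof.
elim: K => [|K IH]; first by rewrite !big_ord0 dot0r.
by rewrite !big_ord_recr /= dotDr IH.
Qed.

Lemma dot_ge0 u : 0 <= dot u u.
Proof. by apply: sumr_ge0 => i _; rewrite -expr2 sqr_ge0. Qed.

Lemma dot_eq0 u : dot u u = 0 -> u = 0.
Proof.
move/eqP; rewrite /dot psumr_eq0 => [/allP u0|i _]; last by rewrite -expr2 sqr_ge0.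
apply/rowP => i; rewrite mxE; apply/eqP.
by have := u0 i (mem_index_enum _); rewrite -expr2 sqrf_eq0.
Qed.

Lemma enorm_ge0 u : 0 <= enorm u.
Proof. exact: sqrtr_ge0. Qed.

Lemma enorm_sqr u : enorm u ^+ 2 = dot u u.
Proof. by rewrite sqr_sqrtr // dot_ge0. Qed.

Lemma ler_enorm u v : (enorm u <= enorm v) = (dot u u <= dot v v).
Proof. by rewrite ler_sqrt // dot_ge0. Qed.

Lemma enormN u : enorm (- u) = enorm u.
Proof. by rewrite /enorm dotNl dotNr opprK. Qed.

Lemma enormZ a u : enorm (a *: u) = `|a| * enorm u.
Proof. by rewrite /enorm dotZl dotZr mulrA -expr2 sqrtrM ?sqr_ge0 // sqrtr_sqr. Qed.

Lemma enorm_eq0 u : enorm u = 0 -> u = 0.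
Proof. by move=> u0; apply: dot_eq0; rewrite -enorm_sqr u0 expr0n. Qed.

Lemma cauchy_schwarz u v : dot u v <= enorm u * enorm v.
Proof.
have [/enorm_eq0 ->|u0] := eqVneq (enorm u) 0; first by rewrite dot0l mulr_ge0 ?enorm_ge0.
have [/enorm_eq0 ->|v0] := eqVneq (enorm v) 0; first by rewrite dot0r mulr_ge0 ?enorm_ge0.
have a0 : 0 < enorm u by rewrite lt_def u0 enorm_ge0.
have b0 : 0 < enorm v by rewrite lt_def v0 enorm_ge0.
have := dot_ge0 (enorm v *: u - enorm u *: v).
rewrite !dotE -!enorm_sqr (dotC v u) => h.
have : 0 <= enorm u * enorm v * (2 * (enorm u * enorm v - dot u v)) by nra.
by rewrite pmulr_rge0 ?mulr_gt0 //; lra.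
Qed.

Lemma cauchy_schwarz_ge u v : - (enorm u * enorm v) <= dot u v.
Proof. by have := cauchy_schwarz (- u) v; rewrite dotNl enormN; lra. Qed.

Lemma ler_enormD u v : enorm (u + v) <= enorm u + enorm v.
Proof.
rewrite -(ler_pXn2r (n := 2)) ?nnegrE ?addr_ge0 ?enorm_ge0 //.
rewrite enorm_sqr !dotE (dotC v u) sqrrD !enorm_sqr.
by have := cauchy_schwarz u v; lra.
Qed.

End InnerProduct.

Section Projection.
Variables (R : realType) (n : nat).
Implicit Types (d e u y z : 'rV[R]_n).

Lemma dot_le0_of_min_along d e :
  (forall t : R, 0 < t -> t <= 1 -> dot d d <= dot (d - t *: e) (d - t *: e)) ->
  dot d e <= 0.
Proof.
move=> dmin.
have slope t : 0 < t -> t <= 1 -> 2 * dot d e <= t * dot e e.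
  move=> t0 t1; have := dmin t t0 t1; rewrite !dotE (dotC e d) => h.
  by rewrite -(ler_pM2l t0); lra.
rewrite leNgt; apply/negP => de0.
have ee0 := dot_ge0 e.
have s0 : 0 < dot d e + dot e e by rewrite ltr_wpDr.
have t0 : 0 < dot d e / (dot d e + dot e e) by rewrite divr_gt0.
have t1 : dot d e / (dot d e + dot e e) <= 1 by rewrite ler_pdivrMr // mul1r lerDl.
have := slope _ t0 t1.
have : dot d e / (dot d e + dot e e) * dot e e <= dot d e by rewrite mulrAC ler_pdivrMr //; nra.
lra.
Qed.

Variables (C : set 'rV[R]_n) (P : 'rV[R]_n -> 'rV[R]_n).
Hypotheses (projP : is_projection C P) (convC : convex_subset C).

Lemma projection_in z : C (P z).
Proof. by case: (projP z). Qed.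

Lemma projection_variational z y : C y -> dot (z - P z) (y - P z) <= 0.
Proof.
move=> Cy; have [CPz Pmin] := projP z.
apply: dot_le0_of_min_along => t t0 t1.
have := Pmin _ (convC Cy CPz (t := t) (introT andP (conj (ltW t0) t1))).
have -> : z - (t *: y + (1 - t) *: P z) = z - P z - t *: (y - P z).
  by apply/rowP => i; rewrite !mxE; ring.
by rewrite ler_enorm.
Qed.

Lemma projection_closer z y : C y -> dot (y - P z) (y - P z) <= dot (y - z) (y - z).
Proof.
move=> Cy; have := projection_variational z Cy.
have -> : y - z = (y - P z) - (z - P z) by rewrite opprB addrA subrK.
move: (y - P z) (z - P z) => a b.
by rewrite !dotE (dotC a b); have := dot_ge0 b; lra.
Qed.

End Projection.

Section Extragradient.
Variables (R : realType) (n : nat).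
Local Notation V := 'rV[R]_n.

Lemma extragradient_ineq (u y x' z g h : V) (lam : R) :
  dot (u - lam *: g - x') (z - x') <= 0 ->
  dot (u - lam *: h - y) (x' - y) <= 0 ->
  dot (lam *: (h - g)) (lam *: (h - g)) <= dot (u - y) (u - y) ->
  dot (x' - z) (x' - z) <= dot (u - z) (u - z) - 2 * lam * dot g (y - z).
Proof.
have -> : u - lam *: g - x' = (u - y) - (x' - y) - lam *: g.
  by apply/rowP => i; rewrite !mxE; ring.
have -> : z - x' = - ((x' - y) + (y - z)) by apply/rowP => i; rewrite !mxE; ring.
have -> : u - lam *: h - y = (u - y) - lam *: h by apply/rowP => i; rewrite !mxE; ring.
have -> : x' - z = (x' - y) + (y - z) by rewrite addrA subrK.
have -> : u - z = (u - y) + (y - z) by rewrite addrA subrK.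
move: (u - y) (x' - y) (y - z) => a b c.
(* the one extra fact needed is 0 <= |lam (h - g) - (x' - y)|^2 *)
have := dot_ge0 (lam *: (h - g) - b).
rewrite !dotE ?(dotC b a) ?(dotC c a) ?(dotC g a) ?(dotC h a) ?(dotC c b) ?(dotC g b)
  ?(dotC h b) ?(dotC g c) ?(dotC h c) ?(dotC h g).
nra.
Qed.

Variables (X Omega : set V) (PX POmega : V -> V) (G : V -> V) (lam : R).
Hypotheses (projX : is_projection X PX) (convX : convex_subset X).
Hypotheses (projO : is_projection Omega POmega) (convO : convex_subset Omega).
Hypothesis subXO : X `<=` Omega.
Hypothesis contrG :
  forall a b, Omega a -> Omega b -> enorm (lam *: (G a - G b)) <= enorm (a - b).

Lemma extragradient_step u y x' z :
  y = PX (u - lam *: G (POmega u)) -> x' = PX (u - lam *: G y) -> X z ->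
  dot (x' - z) (x' - z) <= dot (u - z) (u - z) - 2 * lam * dot (G y) (y - z).
Proof.
move=> y_def x'_def zX.
have yX : X y by rewrite y_def; apply: projection_in projX _.
have x'X : X x' by rewrite x'_def; apply: projection_in projX _.
apply: (extragradient_ineq (h := G (POmega u))).
- by rewrite x'_def; apply: projection_variational.
- by rewrite y_def; apply: projection_variational.
- rewrite -ler_enorm; apply: le_trans (contrG (projection_in projO u) (subXO yX)) _.
  have := projection_closer projO convO u (subXO yX).
  by rewrite -!ler_enorm -(enormN (y - u)) -(enormN (y - _)) !opprB.
Qed.

End Extragradient.

Section SupremumBounds.
Variables (R : realType) (n : nat).
Local Notation V := 'rV[R]_n.
Implicit Types (X Q S : set V) (H : V -> V).

Lemma compact_enorm_bounded X : compact X -> exists B, forall v, X v -> enorm v <= B.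
Proof.
move=> /compact_bounded[M [_ hM]].
exists (Num.sqrt (n%:R * (M + 1) ^+ 2)) => v Xv.
have nv : `|v| <= M + 1 by apply: (hM (M + 1)); rewrite ?ltrDl.
have entry_le i : `|v ord0 i| <= M + 1.
  apply: le_trans nv; rewrite (_ : `|v| = mx_norm v) // mx_normrE.
  by apply/bigmax_geP; right; exists (ord0, i).
rewrite /enorm ler_wsqrtr // mulr_natl -{2}[n]card_ord -sumr_const.
apply: ler_sum => i _; rewrite -expr2 -real_normK ?num_real //.
by apply: lerXn2r; rewrite ?nnegrE ?normr_ge0 ?(le_trans (normr_ge0 _) (entry_le i)).
Qed.

Lemma set_diam_ge X a b : compact X -> X a -> X b -> enorm (a - b) <= set_diam X.
Proof.
move=> /compact_enorm_bounded[B XB] Xa Xb.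
apply: ub_le_sup; last by exists a => //; exists b.
exists (B + B) => _ [u Xu [v Xv <-]].
by apply: le_trans (ler_enormD _ _) _; rewrite enormN lerD ?XB.
Qed.

Lemma set_diam_ge0 X : compact X -> X !=set0 -> 0 <= set_diam X.
Proof. by move=> cX [a Xa]; apply: le_trans (set_diam_ge cX Xa Xa); apply: enorm_ge0. Qed.

Lemma lipschitz_bounded (D X : set V) H L :
  X !=set0 -> compact X -> X `<=` D -> lipschitz_map_on D H L ->
  exists c, forall v, X v -> enorm (H v) <= c.
Proof.
move=> [a Xa] cX XD lipH; exists (enorm (H a) + `|L| * set_diam X) => v Xv.
have -> : H v = H a + (H v - H a) by rewrite addrC subrK.
apply: le_trans (ler_enormD _ _) _; rewrite lerD2l.
apply: le_trans (lipH _ _ (XD _ Xv) (XD _ Xa)) _.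
apply: le_trans (ler_wpM2r (enorm_ge0 _) (ler_norm L)) _.
by apply: ler_wpM2l; rewrite ?normr_ge0 ?set_diam_ge.
Qed.

Lemma sup_norm_ge S H c v :
  (forall v, S v -> enorm (H v) <= c) -> S v -> enorm (H v) <= sup_norm H S.
Proof.
move=> Hc Sv; apply: ub_le_sup; last by exists v.
by exists c => _ [u Su <-]; apply: Hc.
Qed.

Lemma sup_norm_ge0 S H c :
  (forall v, S v -> enorm (H v) <= c) -> S !=set0 -> 0 <= sup_norm H S.
Proof. by move=> Hc [v Sv]; apply: le_trans (sup_norm_ge Hc Sv); apply: enorm_ge0. Qed.

Lemma set_dist_ge0 z Q : Q !=set0 -> 0 <= set_dist z Q.
Proof.
move=> [q Qq]; apply: lb_le_inf; first by exists (enorm (z - q)), q.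
by move=> _ [v _ <-]; apply: enorm_ge0.
Qed.

Section Gap.
Variables (z : V) (H : V -> V) (Q : set V) (b : R).
Hypothesis gap_ub : forall v, Q v -> dot (H v) (z - v) <= b.

Lemma Gap_ge v : Q v -> dot (H v) (z - v) <= Gap z H Q.
Proof. by move=> Qv; apply: ub_le_sup; [exists b => _ [u Qu <-]; apply: gap_ub | exists v]. Qed.

Lemma Gap_le : Q !=set0 -> Gap z H Q <= b.
Proof.
move=> [q Qq]; apply: ge_sup; first by exists (dot (H q) (z - q)), q.
by move=> _ [v Qv <-]; apply: gap_ub.
Qed.

Lemma Gap_ge0 : Q z -> 0 <= Gap z H Q.
Proof. by move=> Qz; have := Gap_ge Qz; rewrite subrr dot0r. Qed.

Lemma Gap_ge_dist c :
  Q !=set0 -> (forall v, Q v -> enorm (H v) <= c) ->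
  - sup_norm H Q * set_dist z Q <= Gap z H Q.
Proof.
move=> Q0 Hc; have B0 := sup_norm_ge0 Hc Q0.
have near_q v : Q v -> - sup_norm H Q * enorm (z - v) <= Gap z H Q.
  move=> Qv; apply: le_trans (Gap_ge Qv).
  apply: le_trans (cauchy_schwarz_ge _ _); rewrite mulNr lerN2.
  by apply: ler_wpM2r; [apply: enorm_ge0 | apply: sup_norm_ge Hc Qv].
have [B_eq0|B_neq0] := eqVneq (sup_norm H Q) 0.
  by case: Q0 => q /near_q; rewrite B_eq0 oppr0 !mul0r.
have B_gt0 : 0 < sup_norm H Q by rewrite lt_def B_neq0.
suff : - Gap z H Q / sup_norm H Q <= set_dist z Q by rewrite ler_pdivrMr //; lra.
case: Q0 => q Qq; apply: lb_le_inf; first by exists (enorm (z - q)), q.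
by move=> _ [v Qv <-]; rewrite ler_pdivrMr //; have := near_q v Qv; lra.
Qed.

End Gap.

End SupremumBounds.

Lemma inertial_dist_sqr (R : realType) n (xk xk1 z : 'rV[R]_n) (a : R) :
  dot (xk + a *: (xk - xk1) - z) (xk + a *: (xk - xk1) - z) =
  (1 + a) * dot (xk - z) (xk - z) - a * dot (xk1 - z) (xk1 - z)
  + a * (1 + a) * dot (xk - xk1) (xk - xk1).
Proof.
have -> : xk + a *: (xk - xk1) - z = (xk - z) + a *: ((xk - z) - (xk1 - z)).
  by apply/rowP => i; rewrite !mxE; ring.
have -> : xk - xk1 = (xk - z) - (xk1 - z) by apply/rowP => i; rewrite !mxE; ring.
by move: (xk - z) (xk1 - z) => p q; rewrite !dotE (dotC q p); ring.
Qed.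

Lemma inertial_telescope (R : realType) (phi alpha delta s : nat -> R) (D : R) :
  (forall k, 0 <= phi k <= D) ->
  (forall k, 0 <= alpha k) -> alpha 0 <= 1 -> (forall k, alpha k.+1 <= alpha k) ->
  (forall k, phi k.+1 <= (1 + alpha k) * phi k - alpha k * phi k.-1 + delta k - s k) ->
  forall K, \sum_(k < K) s k <= D + \sum_(k < K) delta k.
Proof.
move=> phiD alpha_ge0 alpha0_le1 alpha_noninc step.
have lyapunov K : \sum_(k < K) s k + phi K - alpha K * phi K.-1
                  <= (1 - alpha K) * D + \sum_(k < K) delta k.
  elim: K => [|K IH]; first by rewrite !big_ord0 /=; have := phiD 0%N; nra.
  rewrite !big_ord_recr /=.
  by have := step K; have := phiD K; have := alpha_noninc K; have := alpha_ge0 K.+1; nra.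
move=> K; have := lyapunov K; have := phiD K; have := phiD K.-1; have := alpha_ge0 K.
nra.
Qed.

Lemma partial_sum_le_lim (R : realType) (u : nat -> R) K :
  (forall k, 0 <= u k) -> cvgn (series u) -> \sum_(k < K) u k <= limn (series u).
Proof.
move=> u_ge0 u_cvg.
have u_incr : {homo series u : p q / (p <= q)%N >-> p <= q}.
  by move=> p q; apply: nondecreasing_series.
by have := nondecreasing_cvgn_le u_incr u_cvg K; rewrite seriesEord.
Qed.

Section WeightedAverage.
Variables (R : realType) (n : nat) (lam : nat -> R) (y : nat -> 'rV[R]_n).

Lemma dot_weighted_avg c z K :
  \sum_(j < K) lam j != 0 ->
  \sum_(j < K) lam j * dot c (y j - z) =
  (\sum_(j < K) lam j) * dot c ((\sum_(j < K) lam j)^-1 *: \sum_(j < K) lam j *: y j - z).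
Proof.
move=> L0.
rewrite dotDr dotNr dotZr (dot_sumr c K (fun j => lam j *: y j)) mulrDr mulrA mulfV //.
rewrite mul1r mulrN mulr_suml -sumrB.
by apply: eq_bigr => j _; rewrite dotDr dotNr dotZr mulrDr mulrN.
Qed.

Lemma convex_weighted_avg (X : set 'rV[R]_n) K :
  convex_subset X -> (forall j, X (y j)) -> (forall j, 0 < lam j) -> (1 <= K)%N ->
  X ((\sum_(j < K) lam j)^-1 *: \sum_(j < K) lam j *: y j).
Proof.
move=> convX yX lam_gt0; elim: K => [//|K IH] _; case: K IH => [_|K IH].
  by rewrite !big_ord1 scalerA mulVf ?scale1r ?lt0r_neq0.
rewrite (big_ord_recr K.+1) [X in _ *: X](big_ord_recr K.+1) /=.
have := convX _ _ (IH isT) (yX K.+1).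
have : 0 < \sum_(j < K.+1) lam j.
  by rewrite big_ord_recr /= ltr_wpDl ?lam_gt0 // sumr_ge0 // => j _; apply: ltW.
move: (lam_gt0 K.+1) (\sum_(j < K.+1) lam j) (\sum_(j < K.+1) lam j *: y j).
move: (lam K.+1) (y K.+1) => a v a0 A S A0 convAv.
have -> : (A + a)^-1 *: (S + a *: v) = A / (A + a) *: (A^-1 *: S) + (1 - A / (A + a)) *: v.
  by apply/rowP => i; rewrite !mxE; field; rewrite !lt0r_neq0 ?addr_gt0.
have Aa0 : 0 < A + a by rewrite addr_gt0.
apply: convAv; apply/andP; split; first by rewrite divr_ge0 ?ltW.
by rewrite ler_pdivrMr // mul1r lerDl ltW.
Qed.

End WeightedAverage.

Lemma powR_div (R : realType) (b s r : R) :
  0 <= b -> 0 < s -> (b / s) `^ r = b `^ r / s `^ r.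
Proof.
move=> b0 s0.
by rewrite powRM ?invr_ge0 ?(ltW s0) // -powR_inv1 ?(ltW s0) // -powRrM mulN1r powRN.
Qed.

Lemma weakly_sharp_dist_le (R : realType) n (F : 'rV[R]_n -> 'rV[R]_n) (X Q : set 'rV[R]_n)
    (sigma M : R) q z b :
  0 < sigma -> 0 < M -> weakly_sharp F X Q sigma M -> Q q -> X z ->
  dot (F q) (z - q) <= b -> set_dist z Q <= b `^ M^-1 / sigma `^ M^-1.
Proof.
move=> sigma_gt0 M_gt0 sharp Qq Xz Fb.
have d0 : 0 <= set_dist z Q by apply: set_dist_ge0; exists q.
have dM : set_dist z Q `^ M <= b / sigma.
  by rewrite ler_pdivlMr // mulrC; apply: le_trans (sharp _ _ Qq Xz) Fb.
have b0 : 0 <= b.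
  by have := le_trans (powR_ge0 _ _) dM; rewrite pmulr_lge0 ?invr_gt0.
rewrite -powR_div //.
have -> : set_dist z Q = (set_dist z Q `^ M) `^ M^-1.
  by rewrite -powRrM mulfV ?lt0r_neq0 // powRr1.
by apply: ge0_ler_powR; rewrite ?nnegrE ?powR_ge0 ?divr_ge0 ?invr_ge0 ?(ltW M_gt0) ?(ltW sigma_gt0).
Qed.

Section InertialExtragradient.
Variables (R : realType) (n : nat).
Local Notation V := 'rV[R]_n.
Variables (G : V -> V) (X Omega : set V) (PX POmega : V -> V).
Variables (alpha lambda : nat -> R) (x w w' y : nat -> V).
Hypotheses (compX : compact X) (convX : convex_subset X) (convO : convex_subset Omega).
Hypothesis subXO : X `<=` Omega.
Hypotheses (projX : is_projection X PX) (projO : is_projection Omega POmega).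
Hypothesis contrG : forall k a b, Omega a -> Omega b ->
  enorm (lambda k *: (G a - G b)) <= enorm (a - b).
Hypothesis x0X : X (x 0).
Hypothesis w_def : forall k, w k = x k + alpha k *: (x k - x k.-1).
Hypothesis w'_def : forall k, w' k = POmega (w k).
Hypothesis y_def : forall k, y k = PX (w k - lambda k *: G (w' k)).
Hypothesis x_def : forall k, x k.+1 = PX (w k - lambda k *: G (y k)).
Hypotheses (alpha_ge0 : forall k, 0 <= alpha k) (alpha0_le1 : alpha 0 <= 1).
Hypothesis alpha_noninc : forall k, alpha k.+1 <= alpha k.

Let delta k := alpha k * (1 + alpha k) * enorm (x k - x k.-1) ^+ 2.

Lemma iterate_in_X k : X (x k).
Proof. by case: k => [//|k]; rewrite x_def; apply: projection_in projX _. Qed.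

Lemma y_in_X k : X (y k).
Proof. by rewrite y_def; apply: projection_in projX _. Qed.

Lemma energy_step k z : X z ->
  dot (x k.+1 - z) (x k.+1 - z) <=
  (1 + alpha k) * dot (x k - z) (x k - z) - alpha k * dot (x k.-1 - z) (x k.-1 - z)
  + delta k - 2 * lambda k * dot (G (y k)) (y k - z).
Proof.
move=> zX; have := y_def k; rewrite w'_def => yk_def.
apply: le_trans (extragradient_step projX convX projO convO subXO (contrG k) yk_def
  (x_def k) zX) _.
by rewrite w_def inertial_dist_sqr /delta enorm_sqr.
Qed.

Lemma energy_sum z K : X z ->
  \sum_(k < K) 2 * lambda k * dot (G (y k)) (y k - z) <= set_diam X ^+ 2 + \sum_(k < K) delta k.
Proof.
move=> zX; apply: (inertial_telescope (phi := fun k => dot (x k - z) (x k - z))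
  (s := fun k => 2 * lambda k * dot (G (y k)) (y k - z)) (delta := delta)) => // k;
  last exact: energy_step.
rewrite dot_ge0 -enorm_sqr lerXn2r ?nnegrE ?enorm_ge0 ?set_diam_ge0 ?set_diam_ge //.
  by exists z.
exact: iterate_in_X.
Qed.

Variable lam_lo : R.
Hypotheses (lam_lo_gt0 : 0 < lam_lo) (lambda_ge : forall k, lam_lo <= lambda k).
Hypothesis delta_summable : cvgn (series delta).

Let ybar K := (\sum_(j < K) lambda j)^-1 *: \sum_(j < K) lambda j *: y j.

Lemma ybar_in_X K : (1 <= K)%N -> X (ybar K).
Proof.
apply: convex_weighted_avg convX y_in_X _ => k.
exact: lt_le_trans lam_lo_gt0 (lambda_ge k).
Qed.

Lemma avg_gap_le K z c r : (1 <= K)%N -> X z ->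
  (forall k, dot c (y k - z) - r <= dot (G (y k)) (y k - z)) ->
  dot c (ybar K - z) - r <=
  K%:R^-1 * ((set_diam X ^+ 2 + limn (series delta)) / (2 * lam_lo)).
Proof.
move=> K_ge1 zX c_le.
set Lam := \sum_(j < K) lambda j; set E := set_diam X ^+ 2 + limn (series delta).
have Lam_ge : K%:R * lam_lo <= Lam.
  by rewrite mulr_natl -[K in _ *+ K]card_ord -sumr_const; apply: ler_sum => k _.
have K_gt0 : 0 < K%:R :> R by rewrite ltr0n.
have Lam_gt0 : 0 < Lam by apply: lt_le_trans Lam_ge; rewrite mulr_gt0.
have delta_ge0 k : 0 <= delta k.
  by rewrite /delta mulr_ge0 ?sqr_ge0 // mulr_ge0 ?addr_ge0.
have E_ge0 : 0 <= E.
  by rewrite addr_ge0 ?sqr_ge0 // (le_trans _ (partial_sum_le_lim 0 delta_ge0 _)) ?big_ord0.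
have lambda_gt0 k : 0 < lambda k := lt_le_trans lam_lo_gt0 (lambda_ge k).
have sum_le : \sum_(k < K) 2 * lambda k * (dot c (y k - z) - r) <= E.
  apply: (@le_trans _ _ (\sum_(k < K) 2 * lambda k * dot (G (y k)) (y k - z))).
    by apply: ler_sum => k _; rewrite ler_wpM2l ?c_le // mulr_ge0 // ltW.
  by apply: le_trans (energy_sum K zX) _; rewrite lerD2l partial_sum_le_lim.
have avg_eq : \sum_(k < K) 2 * lambda k * (dot c (y k - z) - r) =
              2 * Lam * (dot c (ybar K - z) - r).
  rewrite mulrBr -mulrA -dot_weighted_avg ?lt0r_neq0 // -mulrA mulr_suml !mulr_sumr -sumrB.
  by apply: eq_bigr => k _; ring.
have -> : K%:R^-1 * (E / (2 * lam_lo)) = E / (2 * (K%:R * lam_lo)).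
  by field; rewrite !lt0r_neq0.
apply: (@le_trans _ _ (E / (2 * Lam))).
  by rewrite ler_pdivlMr ?mulr_gt0 // mulrC -avg_eq.
by rewrite ler_wpM2l // lef_pV2 ?posrE ?mulr_gt0 // ler_pM2l.
Qed.

End InertialExtragradient.

Section IneIREG.
Variables (R : realType) (n : nat).
Local Notation V := 'rV[R]_n.
Variables (F H : V -> V) (DomF DomH X Omega : set V) (LF LH : R) (PX POmega : V -> V).
Variables (alpha lambda : nat -> R) (eta lam_lo lam_hi : R) (x w w' y : nat -> V).
Hypotheses (LF_gt0 : 0 < LF) (LH_gt0 : 0 < LH).
Hypotheses (monF : monotone_map_on DomF F) (lipF : lipschitz_map_on DomF F LF).
Hypotheses (monH : monotone_map_on DomH H) (lipH : lipschitz_map_on DomH H LH).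
Hypotheses (X0 : X !=set0) (compX : compact X) (convX : convex_subset X).
Hypotheses (convO : convex_subset Omega).
Hypotheses (subXO : X `<=` Omega) (subOD : Omega `<=` DomF `&` DomH).
Hypotheses (projX : is_projection X PX) (projO : is_projection Omega POmega).
Hypothesis Q0 : VIsol F X !=set0.
Hypothesis x0X : X (x 0).
Hypothesis w_def : forall k, w k = x k + alpha k *: (x k - x k.-1).
Hypothesis w'_def : forall k, w' k = POmega (w k).
Hypothesis y_def : forall k, y k = PX (w k - lambda k *: (F (w' k) + eta *: H (w' k))).
Hypothesis x_def : forall k, x k.+1 = PX (w k - lambda k *: (F (y k) + eta *: H (y k))).
Hypotheses (eta_gt0 : 0 < eta) (alpha_ge0 : forall k, 0 <= alpha k) (alpha0_le1 : alpha 0 <= 1).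
Hypothesis alpha_noninc : forall k, alpha k.+1 <= alpha k.
Hypothesis lambda_bounds : forall k, lam_lo <= lambda k <= lam_hi.
Hypotheses (lam_lo_gt0 : 0 < lam_lo) (lam_hi_le : lam_hi <= 1 / (LF + eta * LH)).
Let delta k := alpha k * (1 + alpha k) * enorm (x k - x k.-1) ^+ 2.
Hypothesis delta_summable : cvgn (series delta).

Let G v := F v + eta *: H v.
Let Q := VIsol F X.
Let energy := set_diam X ^+ 2 + limn (series delta).
Let ybar K := (\sum_(j < K) lambda j)^-1 *: \sum_(j < K) lambda j *: y j.
Let gapF_bound K :=
  K%:R^-1 * (energy / (2 * lam_lo)) + eta * (lam_hi * sup_norm H X * set_diam X / lam_lo).

Let lambda_ge k : lam_lo <= lambda k.
Proof. by case/andP: (lambda_bounds k). Qed.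

Let lambda_gt0 k : 0 < lambda k.
Proof. exact: lt_le_trans lam_lo_gt0 (lambda_ge k). Qed.

Lemma ineireg_contraction k a b : Omega a -> Omega b ->
  enorm (lambda k *: (G a - G b)) <= enorm (a - b).
Proof.
move=> /subOD[DFa DHa] /subOD[DFb DHb].
have L_gt0 : 0 < LF + eta * LH by rewrite addr_gt0 ?mulr_gt0.
have lamL : lambda k * (LF + eta * LH) <= 1.
  rewrite -ler_pdivlMr // div1r -[_^-1]div1r.
  by apply: le_trans lam_hi_le; case/andP: (lambda_bounds k).
have -> : G a - G b = (F a - F b) + eta *: (H a - H b).
  by apply/rowP => i; rewrite !mxE; ring.
rewrite enormZ gtr0_norm //; apply: le_trans (ler_wpM2l (ltW (lambda_gt0 k)) (ler_enormD _ _)) _.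
rewrite enormZ gtr0_norm //.
apply: (@le_trans _ _ (lambda k * ((LF + eta * LH) * enorm (a - b)))).
  apply: ler_wpM2l; first exact: ltW.
  by rewrite mulrDl lerD ?lipF // -mulrA ler_wpM2l ?lipH ?ltW.
by rewrite mulrA ler_piMl ?enorm_ge0.
Qed.

Let avg_gap := avg_gap_le compX convX convO subXO projX projO ineireg_contraction x0X w_def
  w'_def y_def x_def alpha_ge0 alpha0_le1 alpha_noninc lam_lo_gt0 lambda_ge delta_summable.

Let yX k : X (y k) := y_in_X (G := G) projX y_def k.

Let ybarX K (K_ge1 : (1 <= K)%N) : X (ybar K) :=
  ybar_in_X (G := G) convX projX y_def lam_lo_gt0 lambda_ge K_ge1.

Let H_bounded : exists c, forall v, X v -> enorm (H v) <= c.
Proof. by apply: lipschitz_bounded X0 compX _ lipH => v /subXO /subOD[]. Qed.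

Lemma ineireg_gapF_le K : (1 <= K)%N -> forall z, X z -> dot (F z) (ybar K - z) <= gapF_bound K.
Proof.
move=> K_ge1 z zX; have [c Hc] := H_bounded.
have CH_ge0 : 0 <= sup_norm H X := sup_norm_ge0 Hc X0.
have DX_ge0 : 0 <= set_diam X := set_diam_ge0 compX X0.
have err_le : sup_norm H X * set_diam X <= lam_hi * sup_norm H X * set_diam X / lam_lo.
  rewrite ler_pdivlMr //; have := mulr_ge0 CH_ge0 DX_ge0.
  by case/andP: (lambda_bounds 0%N) => lo_le hi_ge; nra.
rewrite /gapF_bound -lerBlDr; apply: le_trans (lerB (lexx _) (ler_wpM2l (ltW eta_gt0) err_le)) _.
apply: (avg_gap K_ge1 zX) => k.
have := monF (subOD (subXO (yX k))).1 (subOD (subXO zX)).1; rewrite dotDl dotNl.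
have H_ge : - (sup_norm H X * set_diam X) <= dot (H (y k)) (y k - z).
  apply: le_trans (cauchy_schwarz_ge _ _); rewrite lerN2.
  by apply: ler_pM; rewrite ?enorm_ge0 ?(sup_norm_ge Hc) ?set_diam_ge.
have := ler_wpM2l (ltW eta_gt0) H_ge; rewrite /G dotDl dotZl; lra.
Qed.

Lemma ineireg_gapH_le K : (1 <= K)%N -> forall q, Q q ->
  dot (H q) (ybar K - q) <= K%:R^-1 * (energy / (2 * lam_lo * eta)).
Proof.
move=> K_ge1 q [qX qsol].
have -> : K%:R^-1 * (energy / (2 * lam_lo * eta)) = K%:R^-1 * (energy / (2 * lam_lo)) / eta.
  by field; rewrite !lt0r_neq0 ?ltr0n.
rewrite ler_pdivlMr // mulrC -dotZl -[X in X <= _]subr0.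
apply: (avg_gap K_ge1 qX) => k.
have := monF (subOD (subXO (yX k))).1 (subOD (subXO qX)).1.
have := monH (subOD (subXO (yX k))).2 (subOD (subXO qX)).2.
have := qsol _ (yX k); rewrite /G !(dotDl, dotNl, dotZl) subr0.
have := eta_gt0; nra.
Qed.

Lemma ineireg_gapH_bounds K : (1 <= K)%N ->
  - sup_norm H Q * set_dist (ybar K) Q <= Gap (ybar K) H Q /\
  Gap (ybar K) H Q <= K%:R^-1 * (energy / (2 * lam_lo * eta)).
Proof.
move=> K_ge1; have [c Hc] := H_bounded.
split; last exact: Gap_le (ineireg_gapH_le K_ge1) Q0.
by apply: (Gap_ge_dist (c := c) (ineireg_gapH_le K_ge1) Q0) => v [/Hc].
Qed.

Lemma ineireg_gapF_bounds K : (1 <= K)%N ->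
  0 <= Gap (ybar K) F X /\ Gap (ybar K) F X <= gapF_bound K.
Proof.
move=> K_ge1; split; last exact: Gap_le (ineireg_gapF_le K_ge1) X0.
exact: Gap_ge0 (ineireg_gapF_le K_ge1) (ybarX K_ge1).
Qed.

Lemma ineireg_gapH_sharp_ge sigma M : 0 < sigma -> 1 <= M -> weakly_sharp F X Q sigma M ->
  forall K, (1 <= K)%N ->
  - (sup_norm H Q / sigma `^ M^-1) * gapF_bound K `^ M^-1 <= Gap (ybar K) H Q.
Proof.
move=> sigma_gt0 M_ge1 sharp K K_ge1; have [c Hc] := H_bounded.
have [q Qq] := Q0.
have dist_le := weakly_sharp_dist_le sigma_gt0 (lt_le_trans ltr01 M_ge1) sharp Qq (ybarX K_ge1)
  (ineireg_gapF_le K_ge1 Qq.1).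
apply: le_trans (ineireg_gapH_bounds K_ge1).1.
rewrite !mulNr lerN2 mulrAC -mulrA ler_wpM2l //.
by apply: (sup_norm_ge0 (c := c) _ Q0) => v [/Hc].
Qed.

End IneIREG.

Theorem theorem3p12 (R : realType) (n : nat)
  (F H : 'rV[R]_n -> 'rV[R]_n) (DomF DomH X Omega : set 'rV[R]_n)
  (LF LH : R) (PX POmega : 'rV[R]_n -> 'rV[R]_n)
  (alpha lambda : nat -> R) (eta lam_lo lam_hi : R)
  (x w w' y : nat -> 'rV[R]_n) :
  (* standing assumptions *)
  0 < LF -> 0 < LH ->
  monotone_map_on DomF F -> lipschitz_map_on DomF F LF ->
  monotone_map_on DomH H -> lipschitz_map_on DomH H LH ->
  X !=set0 -> compact X -> convex_subset X ->
  Omega !=set0 -> closed Omega -> convex_subset Omega ->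
  X `<=` Omega -> Omega `<=` DomF `&` DomH ->
  is_projection X PX -> is_projection Omega POmega ->
  VIsol F X !=set0 ->
  (* IneIREG iterates; x_{-1} = x_0 is encoded as x (k.-1) with 0.-1 = 0 *)
  X (x 0) ->
  (forall k, w k = x k + alpha k *: (x k - x k.-1)) ->
  (forall k, w' k = POmega (w k)) ->
  (forall k, y k = PX (w k - lambda k *: (F (w' k) + eta *: H (w' k)))) ->
  (forall k, x k.+1 = PX (w k - lambda k *: (F (y k) + eta *: H (y k)))) ->
  (* parameter assumptions *)
  0 < eta ->
  (forall k, 0 <= alpha k) -> alpha 0 <= 1 ->
  (forall k, alpha k.+1 <= alpha k) ->
  (forall k, lam_lo <= lambda k <= lam_hi) ->
  0 < lam_lo -> lam_lo <= lam_hi -> lam_hi <= 1 / (LF + eta * LH) ->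
  let delta := fun k => alpha k * (1 + alpha k) * enorm (x k - x k.-1) ^+ 2 in
  cvgn (series delta) ->
  let s_hat := limn (series delta) in
  let Q := VIsol F X in
  let DX := set_diam X in
  let CH := sup_norm H X in
  let BH := sup_norm H Q in
  let Lam := fun k => \sum_(j < k) lambda j in
  let ybar := fun k => (Lam k)^-1 *: \sum_(j < k) lambda j *: y j in
  (* (a) *)
  (forall k : nat, (1 <= k)%N ->
     - BH * set_dist (ybar k) Q <= Gap (ybar k) H Q /\
     Gap (ybar k) H Q <= k%:R^-1 * ((DX ^+ 2 + s_hat) / (2 * lam_lo * eta))) /\
  (* (b) *)
  (forall k : nat, (1 <= k)%N ->
     0 <= Gap (ybar k) F X /\
     Gap (ybar k) F X <= k%:R^-1 * ((DX ^+ 2 + s_hat) / (2 * lam_lo))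
                         + eta * (lam_hi * CH * DX / lam_lo)) /\
  (* (c) *)
  (forall sigma M : R, 0 < sigma -> 1 <= M -> weakly_sharp F X Q sigma M ->
   forall k : nat, (1 <= k)%N ->
     - (BH / sigma `^ (M^-1)) *
       (k%:R^-1 * ((DX ^+ 2 + s_hat) / (2 * lam_lo))
        + eta * (lam_hi * CH * DX / lam_lo)) `^ (M^-1)
     <= Gap (ybar k) H Q).
Proof.
move=> LF_gt0 LH_gt0 monF lipF monH lipH X0 compX convX _ _ convO subXO subOD projX projO Q0
  x0X w_def w'_def y_def x_def eta_gt0 alpha_ge0 alpha0_le1 alpha_noninc lambda_bounds
  lam_lo_gt0 _ lam_hi_le delta delta_summable s_hat Q DX CH BH Lam ybar.
split; [|split].
- exact: (ineireg_gapH_bounds LF_gt0 LH_gt0 monF lipF monH lipH X0 compX convX convO subXO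
    subOD projX projO Q0 x0X w_def w'_def y_def x_def eta_gt0 alpha_ge0 alpha0_le1
    alpha_noninc lambda_bounds lam_lo_gt0 lam_hi_le delta_summable).
- exact: (ineireg_gapF_bounds LF_gt0 LH_gt0 monF lipF lipH X0 compX convX convO subXO
    subOD projX projO x0X w_def w'_def y_def x_def eta_gt0 alpha_ge0 alpha0_le1
    alpha_noninc lambda_bounds lam_lo_gt0 lam_hi_le delta_summable).
- exact: (ineireg_gapH_sharp_ge LF_gt0 LH_gt0 monF lipF monH lipH X0 compX convX convO subXO
    subOD projX projO Q0 x0X w_def w'_def y_def x_def eta_gt0 alpha_ge0 alpha0_le1
    alpha_noninc lambda_bounds lam_lo_gt0 lam_hi_le delta_summable).
Qed.
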